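(* Let $X$ be a binary $N\times t$ matrix that is 3-good, let $S\subseteq[t]$ with $|S|=3$, let $\mathbf{y}=r(X,S)$ and $H=H(X,3,\mathbf{y})=([t],E)$. Let $L_1=\log_2\log_2 t$, $L_2=3L_1$, and let $G'=([t],E')$ be the graph in which distinct vertices $v_1,v_2$ are adjacent iff there are at least $L_2$ hyperedges $e\in E$ with $v_1\in e$ and $v_2\in e$. Then every vertex of $G'$ has degree less than $L_1$.
   Context: For a binary $N\times t$ matrix $X$ with columns $x(1),\dots,x(t)$ and $S\subseteq[t]$, $r(X,S)=\bigvee_{j\in S}x(j)$ (coordinatewise Boolean OR). For $\mathbf{y}\in\{0,1\}^N$, $H(X,3,\mathbf{y})$ is the $3$-uniform hypergraph on $[t]$ whose hyperedges are all $3$-element $S\subseteq[t]$ with $r(X,S)=\mathbf{y}$. A $(3,k)$ configuration of size $L$ is a set of $L$ hyperedges $e_1,\dots,e_L$ with a set $U$, $|U|=k$, such that $e_i\cap e_j=U$ for all $i\ne j$. Fix $p\in(0,1)$; $\Pr_1(s,w)$ is the probability that the OR of $s$ independent uniformly random length-$N$ binary columns of weight $\lfloor pN\rfloor$ equals a fixed vector of weight $w$; $\Pr_2(s,w_1,w)$ is the probability that the OR of $s$ such columns together with a fixed column $\mathbf{y}_1$ of weight $w_1$ equals a fixed vector $\mathbf{y}$ of weight $w$ with $\mathbf{y}\vee\mathbf{y}_1=\mathbf{y}$. With $L_1=\log_2\log_2 t$, $X$ is 3-good if: (1) for every $\mathbf{y}$, $H(X,3,\mathbf{y})$ has no $(3,1)$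 configuration of size $L_1$; (2) for every $\mathbf{y}$ with $|\mathbf{y}|=w$, $H(X,3,\mathbf{y})$ has no $(3,0)$ configuration of size $10\max(t^3\Pr_1(3,w),N)$; (3) for all $\mathbf{y},\mathbf{y}_1$ with $\mathbf{y}\vee\mathbf{y}_1=\mathbf{y}$, $|\mathbf{y}_1|=w_1$, $|\mathbf{y}|=w$, the number of $j$ with $\mathbf{y}_1\vee x(j)=\mathbf{y}$ is less than $10B(N,t)$, where $B(N,t)=t\Pr_2(1,w_1,w)$ if this exceeds $N$, $B(N,t)=N$ if $t^{-1/\sqrt{L_1}}\le t\Pr_2(1,w_1,w)\le N$, and $B(N,t)=L_1/10$ if $t\Pr_2(1,w_1,w)<t^{-1/\sqrt{L_1}}$; (4) for every $\mathbf{y}$ with $|\mathbf{y}|=w$ and integer $w_1\le w$, the number of pairwise disjoint pairs $\{j_1,j_2\}\subseteq[t]$ with $x(j_1)\vee x(j_2)\vee\mathbf{y}=\mathbf{y}$ and $|x(j_1)\vee x(j_2)|=w_1$ is less than $10\max(N,\binom{w}{w_1}t^2\Pr_1(2,w_1))$. *)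

From mathcomp Require Import all_boot.
From Stdlib Require Import Reals.

Set Implicit Arguments.
Unset Strict Implicit.
Unset Printing Implicit Defensive.

(* A binary N x t matrix is given by its columns; column j is the support
   {i | X i j = 1} of the j-th column vector.  A binary vector of length N is
   its support, a set of 'I_N, and its weight is the cardinality. *)
Definition bmatrix (N t : nat) := 'I_t -> {set 'I_N}.

Definition Rleb (a b : R) : bool := if Rle_dec a b then true else false.

Definition rOR (N t : nat) (X : bmatrix N t) (S : {set 'I_t}) : {set 'I_N} :=
  \bigcup_(j in S) X j.

Definition hedges (N t : nat) (X : bmatrix N t) (y : {set 'I_N}) : {set {set 'I_t}} :=
  [set e : {set 'I_t} | (#|e| == 3) && (rOR X e == y)].

Definition config (N t : nat) (X : bmatrix N t) (y : {set 'I_N}) (k : nat)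
  (F : {set {set 'I_t}}) : Prop :=
  F \subset hedges X y /\
  exists U : {set 'I_t}, #|U| = k /\
    forall e1 e2, e1 \in F -> e2 \in F -> e1 != e2 -> e1 :&: e2 = U.

Definition has_config (N t : nat) (X : bmatrix N t) (y : {set 'I_N}) (k : nat)
  (L : R) : Prop :=
  exists F, config X y k F /\ (L <= INR #|F|)%R.

Definition log2 (x : R) : R := (ln x / ln 2)%R.

Definition L1 (t : nat) : R := log2 (log2 (INR t)).

Definition colw (N : nat) (p : R) : nat := Z.to_nat (Int_part (p * INR N)).

(* canonical fixed vector of weight w (first w coordinates) *)
Definition fixvec (N w : nat) : {set 'I_N} := [set i : 'I_N | i < w].

(* Pr_1(s,w): probability that the OR of s independent uniform random columns
   of weight floor(pN) equals a fixed vector of weight w *)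
Definition Pr1 (N : nat) (p : R) (s w : nat) : R :=
  (INR #|[set f : {ffun 'I_s -> {set 'I_N}} |
            [forall i, #|f i| == colw N p] &&
            ((\bigcup_(i < s) f i) == fixvec N w)]|
   / (INR 'C(N, colw N p)) ^ s)%R.

(* Pr_2(s,w1,w): probability that the OR of s such columns together with a
   fixed column y1 of weight w1 equals a fixed y of weight w, y1 <= y *)
Definition Pr2 (N : nat) (p : R) (s w1 w : nat) : R :=
  (INR #|[set f : {ffun 'I_s -> {set 'I_N}} |
            [forall i, #|f i| == colw N p] &&
            ((fixvec N w1 :|: \bigcup_(i < s) f i) == fixvec N w)]|
   / (INR 'C(N, colw N p)) ^ s)%R.

Definition Bnt (N t : nat) (p : R) (w1 w : nat) : R :=
  let q := (INR t * Pr2 N p 1 w1 w)%R in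
  if Rle_dec q (INR N) then
    (if Rle_dec (Rpower (INR t) (- / sqrt (L1 t))) q then INR N else L1 t / 10)%R
  else q.

Definition good3 (N t : nat) (p : R) (X : bmatrix N t) : Prop :=
  (forall y : {set 'I_N}, ~ has_config X y 1 (L1 t)) /\
  (forall y : {set 'I_N},
      ~ has_config X y 0 (10 * Rmax (INR t ^ 3 * Pr1 N p 3 #|y|) (INR N))%R) /\
  (forall y y1 : {set 'I_N}, y1 :|: y = y ->
      (INR #|[set j : 'I_t | y1 :|: X j == y]| < 10 * Bnt N t p #|y1| #|y|)%R) /\
  (forall (y : {set 'I_N}) (w1 : nat), w1 <= #|y| ->
     forall P : {set {set 'I_t}},
       (forall q, q \in P -> #|q| = 2 /\
            (\bigcup_(j in q) X j) :|: y = y /\ #|\bigcup_(j in q) X j| = w1) ->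
       (forall q1 q2, q1 \in P -> q2 \in P -> q1 != q2 -> [disjoint q1 & q2]) ->
       (INR #|P| < 10 * Rmax (INR N) (INR 'C(#|y|, w1) * INR t ^ 2 * Pr1 N p 2 w1))%R).

Definition degG' (N t : nat) (X : bmatrix N t) (y : {set 'I_N}) (v1 : 'I_t) : nat :=
  #|[set v2 : 'I_t | (v2 != v1) &&
      Rleb (3 * L1 t)%R (INR #|[set e in hedges X y | (v1 \in e) && (v2 \in e)]|)]|.

From mathcomp Require Import all_boot zify.
From Stdlib Require Import Reals Lra.

Set Implicit Arguments.
Unset Strict Implicit.
Unset Printing Implicit Defensive.

(* Let F be a maximum sunflower of hyperedges of H with kernel {v}; it is a
   (3,1) configuration, so |F| < L1 by condition (1).  A vertex u lying in more
   than 2|F| hyperedges together with v must lie in a petal of F: otherwise some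
   hyperedge {v,u,x} with x outside all petals would enlarge F.  No petal
   contains two such vertices a and b: replacing that petal by a hyperedge
   through a and then one through b (again chosen outside the other petals)
   would enlarge F.  Every neighbour of v in G' lies in at least 3 L1 > 2|F|
   hyperedges with v, hence deg v <= |F| < L1. *)

Lemma leq_card_bigcup (I T : finType) (P : {pred I}) (F : I -> {set T}) :
  #|\bigcup_(i in P) F i| <= \sum_(i in P) #|F i|.
Proof.
elim/big_rec2: _ => [|i n A _ leAn]; first by rewrite cards0.
by rewrite (leq_trans (leq_card_setU _ _).1) ?leq_add2l.
Qed.

Lemma card3_set3 (T : finType) (e : {set T}) a b :
  #|e| = 3 -> a \in e -> b \in e -> a != b -> exists x, e = [set a; b; x].
Proof.
move=> e3 ae be ab.
have /cards1P[x ex] : #|e :\ a :\ b| == 1.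
  by move: e3; rewrite (cardsD1 a) ae (cardsD1 b) !inE eq_sym ab be !add1n => -[->].
exists x; apply/setP => z; move/setP/(_ z): ex; rewrite !inE.
have [->|za] := eqVneq z a; first by rewrite ae.
by have [->|zb] := eqVneq z b; [rewrite be orbT | move=> /= <-].
Qed.

Section Sunflower.

Variables (T : finType) (H : {set {set T}}) (v : T).

Definition edges_through (u : T) : {set {set T}} :=
  [set e in H | (v \in e) && (u \in e)].

Definition sunflower (F : {set {set T}}) : bool :=
  (F \subset [set e in H | v \in e]) &&
  [forall e1 in F, forall e2 in F, (e1 != e2) ==> (e1 :&: e2 \subset [set v])].

Definition petals (F : {set {set T}}) : {set T} := \bigcup_(e in F) (e :\ v).

Lemma sunflowerP (F : {set {set T}}) :
  reflect ((forall e, e \in F -> e \in H /\ v \in e) /\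
           {in F &, forall e1 e2, e1 != e2 -> e1 :&: e2 \subset [set v]})
          (sunflower F).
Proof.
apply: (iffP andP) => [[/subsetP sub /forall_inP meet]|[memF meet]].
  split=> [e /sub|e1 e2 e1F e2F]; first by rewrite inE => /andP.
  by move: (meet e1 e1F) => /forall_inP/(_ e2 e2F)/implyP.
split; first by apply/subsetP => e /memF[eH ve]; rewrite inE eH.
by apply/forall_inP => e1 e1F; apply/forall_inP => e2 e2F; apply/implyP; apply: meet.
Qed.

Lemma sunflower0 : sunflower set0.
Proof. by apply/sunflowerP; split=> [e|e1 e2]; rewrite inE. Qed.

Lemma sunflowerS (F F' : {set {set T}}) :
  F' \subset F -> sunflower F -> sunflower F'.
Proof.
move=> /subsetP sub /sunflowerP[memF meet]; apply/sunflowerP.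
by split=> [e /sub /memF //|e1 e2 /sub e1F /sub e2F]; apply: meet.
Qed.

Lemma mem_petals (F : {set {set T}}) e z :
  e \in F -> z \in e -> z != v -> z \in petals F.
Proof. by move=> eF ze zv; apply/bigcupP; exists e; rewrite // !inE zv. Qed.

Lemma petalsU1 (F : {set {set T}}) e : petals (e |: F) = (e :\ v) :|: petals F.
Proof. by rewrite /petals bigcup_setU big_set1. Qed.

Lemma notin_petalsD1 (F : {set {set T}}) e z :
  sunflower F -> e \in F -> z \in e -> z != v -> z \notin petals (F :\ e).
Proof.
move=> /sunflowerP[_ meet] eF ze zv; apply/bigcupP => -[f].
rewrite !inE => /andP[fe fF] /andP[_ zf].
by have /subsetP/(_ z) := meet f e fF eF fe; rewrite !inE zf ze (negbTE zv) => /(_ isT).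
Qed.

Hypothesis H3 : forall e, e \in H -> #|e| = 3.

Lemma card_petals (F : {set {set T}}) : sunflower F -> #|petals F| <= 2 * #|F|.
Proof.
move=> /sunflowerP[memF _]; apply: leq_trans (leq_card_bigcup _ _) _.
rewrite mulnC -sum_nat_const; apply: leq_sum => e /memF[/H3 e3 ve].
by move: e3; rewrite (cardsD1 v e) ve add1n => -[->].
Qed.

Lemma exists_edge_avoiding u (Y : {set T}) :
  u != v -> #|Y| < #|edges_through u| -> exists2 x, x \notin Y & [set v; u; x] \in H.
Proof.
move=> uv ltY.
have [x /andP[xY xH] | none] := pickP [pred x | (x \notin Y) && ([set v; u; x] \in H)].
  by exists x.
suff sub : edges_through u \subset [set [set v; u; x] | x in Y].
  by have := leq_trans (subset_leq_card sub) (leq_imset_card _ _); rewrite leqNgt ltY.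
apply/subsetP => e; rewrite inE => /and3P[eH ve ue].
have [x ex] : exists x, e = [set v; u; x] by apply: card3_set3; rewrite 1?eq_sym ?H3.
by apply/imsetP; exists x => //; apply: contraFT (none x) => /= ->; rewrite -ex.
Qed.

Lemma sunflower_extend (F : {set {set T}}) u (Y : {set T}) :
  sunflower F -> u != v -> u \notin petals F ->
  #|petals F :|: Y| < #|edges_through u| ->
  exists2 x, x \notin Y &
    sunflower ([set v; u; x] |: F) /\ #|[set v; u; x] |: F| = #|F|.+1.
Proof.
move=> /sunflowerP[memF meet] uv uF /(exists_edge_avoiding uv)[x].
rewrite inE negb_or => /andP[xF xY] eH; exists x => //.
set e := [set v; u; x].
have new_petal z : z \in e -> z != v -> z \notin petals F.
  by move=> + zv; rewrite !inE (negbTE zv) => /orP[] /eqP->.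
have meet_e f : f \in F -> e :&: f \subset [set v].
  move=> fF; apply/subsetP => z; rewrite in_setI in_set1 => /andP[ze zf].
  by apply/contraT => zv; have := new_petal z ze zv; rewrite (mem_petals fF zf zv).
have eF : e \notin F.
  by apply: contra uF => eF; rewrite (mem_petals eF) // !inE eqxx orbT.
split; last by rewrite cardsU1 eF.
apply/sunflowerP; split=> [f /setU1P[->|/memF //]|]; first by rewrite eH !inE eqxx.
move=> e1 e2 /setU1P[->|e1F] /setU1P[->|e2F]; rewrite ?eqxx // => ne.
- exact: meet_e.
- by rewrite setIC; apply: meet_e.
- exact: meet.
Qed.

Variable F : {set {set T}}.
Hypotheses (sunF : sunflower F) (maxF : forall F', sunflower F' -> #|F'| <= #|F|).

Lemma heavy_mem_petals u :
  u != v -> 2 * #|F| < #|edges_through u| -> u \in petals F.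
Proof.
move=> uv heavy; apply/contraT => uF.
have lt : #|petals F :|: set0| < #|edges_through u|.
  by rewrite setU0 (leq_ltn_trans (card_petals sunF)).
have [x _ [/maxF le card]] := sunflower_extend sunF uv uF lt.
by rewrite card ltnn in le.
Qed.

Lemma heavy_petal_uniq e a b :
  e \in F -> a \in e -> b \in e -> a != v -> b != v ->
  2 * #|F| < #|edges_through a| -> 2 * #|F| < #|edges_through b| -> a = b.
Proof.
move=> eF ae be av bv heavy_a heavy_b; apply/eqP/contraT => ab.
set F' := F :\ e.
have sunF' : sunflower F' := sunflowerS (subsetDl F [set e]) sunF.
have cardF : #|F| = #|F'|.+1 by rewrite (cardsD1 e F) eF.
have petalsF' := card_petals sunF'.
have lt_a : #|petals F' :|: [set b]| < #|edges_through a|.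
  by have := (leq_card_setU (petals F') [set b]).1; rewrite cards1; lia.
have [x] := sunflower_extend sunF' av (notin_petalsD1 sunF eF ae av) lt_a.
rewrite inE => xb [sunF1 cardF1].
have bF1 : b \notin petals ([set v; a; x] |: F').
  rewrite petalsU1 !inE (negbTE bv) (eq_sym b) (negbTE ab) (eq_sym b x) (negbTE xb).
  exact: notin_petalsD1.
have lt_b : #|petals ([set v; a; x] |: F') :|: set0| < #|edges_through b|.
  by rewrite setU0 (leq_ltn_trans (card_petals sunF1)) // cardF1 -cardF.
have [z _ [/maxF le card]] := sunflower_extend sunF1 bv bF1 lt_b.
by rewrite card cardF1 -cardF ltnn in le.
Qed.

Lemma card_heavy_le :
  #|[set u | (u != v) && (2 * #|F| < #|edges_through u|)]| <= #|F|.
Proof.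
set heavy := [set u | _].
have cover : heavy \subset \bigcup_(e in F) (heavy :&: e).
  apply/subsetP => u hu; move: (hu); rewrite inE => /andP[uv lt].
  have /bigcupP[e eF] := heavy_mem_petals uv lt.
  by rewrite !inE => /andP[_ ue]; apply/bigcupP; exists e; rewrite // inE hu.
apply: leq_trans (subset_leq_card cover) _; apply: leq_trans (leq_card_bigcup _ _) _.
rewrite -sum1_card; apply: leq_sum => e eF; apply/card_le1_eqP => a b.
rewrite !inE => /andP[/andP[av ha] ae] /andP[/andP[bv hb] be].
by rewrite (heavy_petal_uniq eF ae be av bv ha hb).
Qed.

End Sunflower.

Lemma card_hedge (N t : nat) (X : bmatrix N t) (y : {set 'I_N}) e :
  e \in hedges X y -> #|e| = 3.
Proof. by rewrite inE => /andP[/eqP]. Qed.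

Lemma sunflower_config (N t : nat) (X : bmatrix N t) (y : {set 'I_N}) v F :
  sunflower (hedges X y) v F -> config X y 1 F.
Proof.
move=> /sunflowerP[memF meet]; split; first by apply/subsetP => e /memF[].
exists [set v]; split=> [|e1 e2 e1F e2F ne]; first exact: cards1.
apply/eqP; rewrite eqEsubset meet //= sub1set inE.
by rewrite (memF _ e1F).2 (memF _ e2F).2.
Qed.

Theorem lemma3 (N t : nat) (p : R) (X : bmatrix N t) (S : {set 'I_t}) :
  (0 < p < 1)%R ->
  good3 p X ->
  #|S| = 3 ->
  forall v1 : 'I_t, (INR (degG' X (rOR X S) v1) < L1 t)%R.
Proof.
move=> _ [no_config1 _] _ v1.
set H := hedges X (rOR X S).
have [F sunF maxF] := arg_maxnP (fun F : {set {set 'I_t}} => #|F|) (sunflower0 H v1).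
have ltF : (INR #|F| < L1 t)%R.
  apply: Rnot_le_lt => leF; apply: (no_config1 (rOR X S)).
  by exists F; split; first exact: sunflower_config sunF.
have lt2F : (INR (2 * #|F|) < 3 * L1 t)%R.
  by rewrite mult_INR [INR 2]/=; have := pos_INR #|F|; lra.
apply: Rle_lt_trans ltF; apply/le_INR/leP.
apply: leq_trans (card_heavy_le (@card_hedge _ _ X _) sunF maxF).
apply/subset_leq_card/subsetP => u; rewrite !inE => /andP[-> /=].
rewrite /Rleb; case: Rle_dec => // le3 _.
exact/ltP/INR_lt/(Rlt_le_trans _ _ _ lt2F le3).
Qed.
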